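(* Let $L\ge1$ and $\Gamma^0\in\{0,1\}^L$ (coordinates indexed by $\mathbb{Z}/L\mathbb{Z}$, viewed as a cycle). Color the positions so that each maximal cyclic interval (run) of equal values in $\Gamma^0$ receives its own distinct color, and run the following colored copying process $\tilde\Gamma^i$: given $\tilde\Gamma^i$, choose a permutation $\sigma$ of $\{0,\dots,L-1\}$ uniformly at random, set $\Delta_0=\tilde\Gamma^i$, and for $1\le j\le L$ let $\Delta_j$ be obtained from $\Delta_{j-1}$ by giving position $\sigma(j-1)$ the current color of position $(\sigma(j-1)+1)\bmod L$ (all other positions unchanged); set $\tilde\Gamma^{i+1}=\Delta_L$. Fix one color and let $X_i$ be the number of positions of that color in $\tilde\Gamma^i$. Then $(X_i)_{i\ge0}$ is a martingale with respect to the filtration generated by $(\tilde\Gamma^i)_{i\ge0}$. *)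

From mathcomp Require Import all_boot all_order all_algebra all_fingroup.
Set Implicit Arguments. Unset Strict Implicit. Unset Printing Implicit Defensive.

(* Positions are 'I_L = Z/LZ; the cyclic successor of p is ordS p (= (p+1) mod L).
   Colors are natural numbers; a colored configuration is {ffun 'I_L -> nat}. *)

(* Forward cyclic interval from i to j (i, i+1, ..., j mod L) on which g is constant. *)
Definition fwd_const L (g : {ffun 'I_L -> bool}) (i j : 'I_L) : Prop :=
  exists k : nat, k < L /\ (i + k) %% L = j /\
    forall t, t <= k -> forall p : 'I_L, p = (i + t) %% L :> nat -> g p = g i.

Definition same_run L (g : {ffun 'I_L -> bool}) (i j : 'I_L) : Prop :=
  fwd_const g i j \/ fwd_const g j i.

Definition run_coloring L (g : {ffun 'I_L -> bool}) (c0 : {ffun 'I_L -> nat}) : Prop :=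
  forall i j : 'I_L, c0 i = c0 j <-> same_run g i j.

Definition copy_at L (c : {ffun 'I_L -> nat}) (p : 'I_L) : {ffun 'I_L -> nat} :=
  [ffun q => if q == p then c (ordS p) else c q].

(* one sweep: Delta_0 = c, Delta_j = copy_at Delta_{j-1} (sigma (j-1)), result Delta_L *)
Definition sweep L (c : {ffun 'I_L -> nat}) (sigma : {perm 'I_L}) : {ffun 'I_L -> nat} :=
  foldl (fun d (j : 'I_L) => copy_at d (sigma j)) c (enum 'I_L).

Definition run_proc L (c0 : {ffun 'I_L -> nat}) (s : seq {perm 'I_L}) :=
  foldl (@sweep L) c0 s.

Definition count_color L (a : nat) (c : {ffun 'I_L -> nat}) : nat :=
  #|[set p : 'I_L | c p == a]|.

(* The process is driven by i.i.d. uniform permutations sigma_0, sigma_1, ...;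
   Gamma^k = run_proc c0 (take k s).  Over the uniform (finite) probability space of
   (n+1)-tuples of permutations, the sigma-algebra F_n generated by
   (Gamma^0,...,Gamma^n) is atomic, with atoms {Gamma^k = h k for all k <= n}.
   X_n = count_color a Gamma^n is adapted and bounded, and the martingale property
   E[X_{n+1} | F_n] = X_n is equivalent to E[X_{n+1} 1_A] = E[X_n 1_A] for every atom A;
   the uniform normalising constant 1/(L!)^(n+1) cancels on both sides. *)
Definition colored_martingale L (c0 : {ffun 'I_L -> nat}) (a : nat) : Prop :=
  forall (n : nat) (h : 'I_n.+1 -> {ffun 'I_L -> nat}),
    \sum_(s : n.+1.-tuple {perm 'I_L} |
            [forall k : 'I_n.+1, run_proc c0 (take k s) == h k])
        count_color a (run_proc c0 s)
    = \sum_(s : n.+1.-tuple {perm 'I_L} |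
            [forall k : 'I_n.+1, run_proc c0 (take k s) == h k])
        count_color a (run_proc c0 (take n s)).

From mathcomp Require Import all_boot all_order all_algebra all_fingroup.
Set Implicit Arguments. Unset Strict Implicit. Unset Printing Implicit Defensive.

(* A sweep only moves colours around, so the configuration after a
   sweep with sigma is c \o src_sigma for a map src_sigma on positions that does
   not depend on c. The copying rule commutes with the rotations of Z/LZ, hence
   src_(rot_t \o sigma) \o rot_t = rot_t \o src_sigma; averaging over sigma,
   position p therefore reads c at src_sigma(0) + p, and p |-> src_sigma(0) + p is
   a bijection.  So the mean colour count after one sweep equals the current
   count, and conditioning on the history only restricts the earlier
   permutations, leaving the last one uniform. *)

Lemma take_tuple_rcons (T : Type) m (t : m.-tuple T) x : take m (rcons t x) = t.
Proof. by rewrite -cats1 take_size_cat ?size_tuple. Qed.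

Section TupleRcons.
Variables (R : Type) (idx : R) (op : Monoid.com_law idx) (T : finType) (m : nat).

Lemma big_tuple_rcons (F : seq T -> R) :
  \big[op/idx]_(s : m.+1.-tuple T) F s
  = \big[op/idx]_(t : m.-tuple T) \big[op/idx]_(x : T) F (rcons t x).
Proof.
rewrite pair_big /=.
pose split_last (s : m.+1.-tuple T) :=
  ([tuple of belast (thead s) (behead s)], last (thead s) (behead s)).
rewrite (reindex (fun p : m.-tuple T * T => [tuple of rcons p.1 p.2])) //=.
exists split_last => [[t x] _ | s _]; apply/eqP; rewrite /split_last /=.
- rewrite xpair_eqE -val_eqE /thead (tnth_nth x) /=.
  by case: t => [[|y t] Ht] //=; rewrite belast_rcons last_rcons !eqxx.
- by case/tupleP: s => x s; rewrite -val_eqE /= theadE -lastI.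
Qed.

Lemma big_tuple_rcons_prefix (P : pred (seq T)) (F : seq T -> R) :
  \big[op/idx]_(s : m.+1.-tuple T | P (take m s)) F s
  = \big[op/idx]_(t : m.-tuple T | P t) \big[op/idx]_(x : T) F (rcons t x).
Proof.
rewrite big_mkcond (big_tuple_rcons (fun s => if P (take m s) then F s else idx)).
rewrite [RHS]big_mkcond /=; apply: eq_bigr => t _.
under eq_bigr do rewrite take_tuple_rcons.
by case: (P t); rewrite // big1_eq.
Qed.
End TupleRcons.

Section Sweep.
Variable L : nat.
Implicit Types (sigma : {perm 'I_L}) (p q : 'I_L).

Definition copy_succ (T : Type) (d : {ffun 'I_L -> T}) p : {ffun 'I_L -> T} :=
  [ffun q => if q == p then d (ordS p) else d q].

Definition sweep_map (T : Type) (d : {ffun 'I_L -> T}) sigma : {ffun 'I_L -> T} :=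
  foldl (fun d j => copy_succ d (sigma j)) d (enum 'I_L).

Definition sweep_source sigma : {ffun 'I_L -> 'I_L} := sweep_map [ffun q => q] sigma.

Lemma sweep_map_comp (T U : Type) (f : T -> U) (d : {ffun 'I_L -> T}) sigma :
  sweep_map [ffun q => f (d q)] sigma = [ffun q => f (sweep_map d sigma q)].
Proof.
rewrite /sweep_map; elim: (enum _) d => [|j s IHs] d /=.
  by apply/ffunP => q; rewrite !ffunE.
rewrite -IHs; congr foldl; apply/ffunP => q; rewrite !ffunE.
by case: (q == sigma j).
Qed.

Lemma sweepE (c : {ffun 'I_L -> nat}) sigma q :
  sweep c sigma q = c (sweep_source sigma q).
Proof.
have /ffunP/(_ q) := sweep_map_comp c [ffun p => p] sigma.
rewrite ffunE => <-; congr (fun_of_fin (foldl _ _ _) q).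
by apply/ffunP => p; rewrite !ffunE.
Qed.

Section Equivariance.
Variable r : {perm 'I_L}.
Hypothesis r_ordS : forall p, r (ordS p) = ordS (r p).

Lemma copy_succ_perm (T : Type) (d : {ffun 'I_L -> T}) p :
  copy_succ [ffun q => d (r q)] p = [ffun q => copy_succ d (r p) (r q)].
Proof. by apply/ffunP => q; rewrite !ffunE (inj_eq perm_inj) r_ordS. Qed.

Lemma sweep_map_perm (T : Type) (d : {ffun 'I_L -> T}) sigma :
  sweep_map [ffun q => d (r q)] sigma = [ffun q => sweep_map d (sigma * r)%g (r q)].
Proof.
rewrite /sweep_map; elim: (enum _) d => [|j s IHs] d /=.
  by apply/ffunP => q; rewrite !ffunE.
by rewrite copy_succ_perm IHs permM.
Qed.

Lemma sweep_source_perm sigma q :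
  sweep_source (sigma * r)%g (r q) = r (sweep_source sigma q).
Proof.
have id_r : [ffun q => [ffun q => q] (r q)] = [ffun q => r ([ffun q => q] q)].
  by apply/ffunP => p; rewrite !ffunE.
have := sweep_map_perm [ffun q => q] sigma.
rewrite id_r sweep_map_comp => /ffunP/(_ q).
by rewrite !ffunE.
Qed.

End Equivariance.
End Sweep.

Section Cyclic.
Import GRing.Theory.
Variable n : nat.
Local Notation I := 'I_n.+1.

Lemma ordS_addr1 (p : I) : ordS p = (p + Zp1)%R.
Proof. by apply: val_inj; rewrite /= modnDmr addn1. Qed.

Definition rotation (t : I) : {perm I} := perm (@addIr _ t).

Lemma rotation_ordS (t p : I) : rotation t (ordS p) = ordS (rotation t p).
Proof. by rewrite !permE !ordS_addr1 addrAC. Qed.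

Lemma count_colorE a (d : {ffun I -> nat}) :
  count_color a d = \sum_(p : I) (d p == a).
Proof. by rewrite /count_color cardsE -sum1_card big_mkcond. Qed.

Lemma sum_count_color_sweep a (c : {ffun I -> nat}) :
  \sum_(sigma : {perm I}) count_color a (sweep c sigma)
  = \sum_(sigma : {perm I}) count_color a c.
Proof.
have shift_source p : \sum_(sigma : {perm I}) (c (sweep_source sigma p) == a)
    = \sum_(sigma : {perm I}) (c (sweep_source sigma 0 + p)%R == a).
  rewrite (reindex_inj (@mulIg _ (rotation p))) /=; apply: eq_bigr => sigma _.
  rewrite -[p in sweep_source _ p]add0r.
  have := sweep_source_perm (rotation_ordS p) sigma 0%R.
  by rewrite !permE => ->.
have count_sweep sigma :
    count_color a (sweep c sigma) = \sum_p (c (sweep_source sigma p) == a).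
  by rewrite count_colorE; apply: eq_bigr => p _; rewrite sweepE.
under eq_bigr do rewrite count_sweep.
rewrite exchange_big (eq_bigr _ (fun p _ => shift_source p)).
rewrite exchange_big /=; apply: eq_bigr => sigma _.
by rewrite count_colorE [RHS](reindex_inj (@addrI _ (sweep_source sigma 0%R))).
Qed.

End Cyclic.

Theorem lemma3 (L : nat) (hL : 0 < L) (g0 : {ffun 'I_L -> bool})
  (c0 : {ffun 'I_L -> nat}) (hc0 : run_coloring g0 c0)
  (a : nat) (ha : exists i : 'I_L, c0 i = a) :
  colored_martingale c0 a.
Proof.
case: L hL g0 c0 hc0 ha => [//|n] _ _ c0 _ _ m h.
pose history_ok (t : seq {perm 'I_n.+1}) :=
  [forall k : 'I_m.+1, run_proc c0 (take k t) == h k].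
have prefix (s : m.+1.-tuple {perm 'I_n.+1}) : history_ok s = history_ok (take m s).
  by apply: eq_forallb => k; rewrite take_takel // -ltnS.
rewrite !(eq_bigl _ _ prefix).
rewrite (big_tuple_rcons_prefix _ m history_ok
           (fun s => count_color a (run_proc c0 s))).
rewrite (big_tuple_rcons_prefix _ m history_ok
           (fun s => count_color a (run_proc c0 (take m s)))).
apply: eq_bigr => t _.
under [RHS]eq_bigr do rewrite take_tuple_rcons.
under eq_bigr do rewrite /run_proc foldl_rcons.
exact: sum_count_color_sweep.
Qed.
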